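(* Let $\lambda_0$ be non-recurrent. For every $q\in(0,1)$ there exist $N_1\in\mathbb{N}$, $r>0$ and $\delta>0$ such that the following holds: for every $\lambda\in D(\lambda_0,r)$ and every $n\ge N_1$, if $|\xi_{j,k}(\lambda)-\xi_{j,k}(\lambda_0)|\le\delta$ for all $0\le j\le n$ and all $0\le k\le\widetilde N$, then $$\left|\frac{\zeta_n'(\lambda)}{(f_\lambda^n)'(0)}-\frac{L_{\lambda_0}}{\lambda_0}\right|\le q\left|\frac{L_{\lambda_0}}{\lambda_0}\right|.$$ The same holds with $\zeta_n(\lambda)$ and $f_\lambda$ replaced by $\xi_n(\lambda)$ and $g_\lambda$ respectively.
   Context: For $\lambda\in\mathbb{C}\setminus\{0\}$ let $f_\lambda(z)=\lambda e^z$ with Julia set $\mathcal{J}(f_\lambda)$ and post-singular set $\mathcal{P}(f_\lambda)=\overline{\{f_\lambda^n(0): n\ge 0\}}$. A parameter $\lambda$ is non-recurrent if $0\in\mathcal{J}(f_\lambda)$ and there is $\Delta>0$ with $\mathcal{P}(f_\lambda)\cap D(0,\Delta)=\{0\}$. For non-recurrent $\lambda_0$, by a result of Benini there exist an integer $\widetilde N\ge1$ and $\tilde\gamma>1$ with $|(f_{\lambda_0}^k)'(z)|>\tilde\gamma$ for all $k\ge\widetilde N$ and all $z\in\mathcal{P}(f_{\lambda_0})$; fix such $\widetilde N$. Set $g_\lambda=f_\lambda^{\widetilde N}$, $\zeta_n(\lambda)=f^n_\lambda(0)$, $\xi_n(\lambda)=g^n_\lambda(0)$ and $\xi_{n,k}(\lambda)=f^k_\lambda(\xi_n(\lambda))$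 for $0\le k\le \widetilde N$. Here $\zeta_n'$, $\xi_n'$ are derivatives in $\lambda$, and $(f_\lambda^n)'(0)$, $(g^n_\lambda)'(0)$ are derivatives in $z$ at $0$ (with $(f^0_\lambda)'\equiv1$). For non-recurrent $\lambda_0$, the limit $L_{\lambda_0}=\lim_{n\to\infty}\sum_{j=0}^n 1/(f^j_{\lambda_0})'(0)$ exists and satisfies $L_{\lambda_0}\ne 0,\infty$ (Urbański–Zdunik). *)

From Stdlib Require Import Reals ClassicalEpsilon.
From Coquelicot Require Import Coquelicot.
Open Scope R_scope.

Definition Cexp (z : C) : C := (exp (Re z) * cos (Im z), exp (Re z) * sin (Im z)).

Definition Cderiv (f : C -> C) (z : C) : C :=
  epsilon (inhabits (RtoC 0)) (fun d : C => @is_derive C_AbsRing C_NormedModule f z d).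

Definition fexp (lam : C) (z : C) : C := Cmult lam (Cexp z).
Definition fiter (lam : C) (n : nat) : C -> C := Nat.iter n (fexp lam).

Definition giter (Nt : nat) (lam : C) (n : nat) : C -> C := Nat.iter n (fiter lam Nt).

Definition zeta (n : nat) (lam : C) : C := fiter lam n (RtoC 0).
Definition xi (Nt n : nat) (lam : C) : C := giter Nt lam n (RtoC 0).
Definition xik (Nt n k : nat) (lam : C) : C := fiter lam k (xi Nt n lam).

(** Normality of the iterates of F on the disk D(z0, r): every subsequence of
    (F^n) has a further subsequence converging locally uniformly on D(z0,r)
    (i.e. uniformly on every closed subdisk D̄(z0,s), s<r) either to a finite
    function or to infinity. *)
Definition strict_incr (phi : nat -> nat) : Prop := forall k, (phi k < phi (S k))%nat.

Definition loc_unif_conv (fs : nat -> C -> C) (g : C -> C) (z0 : C) (r : R) : Prop :=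
  forall s, 0 < s < r -> forall eps, 0 < eps ->
    exists N, forall n, (N <= n)%nat -> forall w, Cmod (Cminus w z0) <= s ->
      Cmod (Cminus (fs n w) (g w)) < eps.

Definition loc_unif_infty (fs : nat -> C -> C) (z0 : C) (r : R) : Prop :=
  forall s, 0 < s < r -> forall M,
    exists N, forall n, (N <= n)%nat -> forall w, Cmod (Cminus w z0) <= s ->
      M < Cmod (fs n w).

Definition normal_iterates (F : C -> C) (z0 : C) (r : R) : Prop :=
  forall phi, strict_incr phi -> exists psi, strict_incr psi /\
    ((exists g, loc_unif_conv (fun k => Nat.iter (phi (psi k)) F) g z0 r) \/
     loc_unif_infty (fun k => Nat.iter (phi (psi k)) F) z0 r).

Definition Fatou (F : C -> C) (z : C) : Prop := exists r, 0 < r /\ normal_iterates F z r.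
Definition Julia (F : C -> C) (z : C) : Prop := ~ Fatou F z.

Definition postsing (lam : C) (z : C) : Prop :=
  forall eps, 0 < eps -> exists n, Cmod (Cminus (zeta n lam) z) < eps.

Definition nonrecurrent (lam : C) : Prop :=
  lam <> RtoC 0 /\ Julia (fexp lam) (RtoC 0) /\
  exists Delta, 0 < Delta /\
    forall z, (postsing lam z /\ Cmod z < Delta) <-> z = RtoC 0.

(* Since [f_lam' = f_lam], the multiplier [(f_lam^n)'(0)] is the product [zeta_1 ... zeta_n], and
   differentiating [zeta_(n+1) = lam e^(zeta_n)] in [lam] gives
   [zeta_n'(lam) / (f_lam^n)'(0) = (1 / lam) * sum_(j<n) 1 / (f_lam^j)'(0)].
   Non-recurrence keeps every [zeta_i(lam0)], [i >= 1], at distance at least [Delta] from 0, and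
   Benini's expansion makes each block of [Nt] consecutive factors larger than [gam]. Both properties
   survive a small perturbation of the [zeta_i], so the partial products grow geometrically, uniformly
   in [lam]: the tails of the sums are uniformly small, and the finitely many remaining terms depend
   continuously on the [zeta_i]. The statement for [xi_n] is the one for [zeta_(n Nt)]. *)

From Stdlib Require Import Reals Lra Lia Psatz FunctionalExtensionality ClassicalEpsilon.
From Coquelicot Require Import Coquelicot.
Open Scope R_scope.

Local Notation is_Cderive f z l := (@is_derive C_AbsRing (AbsRing_NormedModule C_AbsRing) f z l).

(* Coquelicot's differentiation rules are stated on [AbsRing_NormedModule C_AbsRing], while [Cderiv]
   refers to [C_NormedModule]; the two derivative predicates coincide. *)
Lemma Cderiv_eq (f : C -> C) (z l : C) : is_Cderive f z l -> Cderiv f z = l.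
Proof.
  intros [_ Hf].
  assert (Hl : @is_derive C_AbsRing C_NormedModule f z l).
  { split; [apply is_linear_scal_l|].
    intros x Hx eps; exact (Hf x Hx eps). }
  unfold Cderiv.
  assert (Hex : exists d, @is_derive C_AbsRing C_NormedModule f z d) by (exists l; exact Hl).
  rewrite <- (is_C_derive_unique f z l Hl).
  symmetry; apply is_C_derive_unique, (epsilon_spec (inhabits (RtoC 0)) _ Hex).
Qed.

Lemma is_Cderive_intro (f : C -> C) (z l : C) :
  (forall eps, 0 < eps -> exists d, 0 < d /\ forall y, Cmod (Cminus y z) < d ->
     Cmod (Cminus (Cminus (f y) (f z)) (Cmult (Cminus y z) l)) <= eps * Cmod (Cminus y z)) ->
  is_Cderive f z l.
Proof.
  intros H. split; [apply is_linear_scal_l|].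
  intros x Hx. apply (@is_filter_lim_locally_unique C_AbsRing (AbsRing_NormedModule C_AbsRing)) in Hx. subst x.
  intros eps. destruct (H eps (cond_pos eps)) as [d [Hd Hy]].
  exists (mkposreal d Hd). intros y By. exact (Hy y By).
Qed.

Lemma exp_sub_lin_le u : Rabs u <= /2 -> Rabs (exp u - 1 - u) <= 2 * u ^ 2 /\ exp u <= 2.
Proof.
  intros Hu. apply Rabs_le_between in Hu.
  pose proof (exp_ineq1_le u). pose proof (exp_ineq1_le (- u)). pose proof (exp_pos u).
  assert (exp u * exp (- u) = 1) by (rewrite <- exp_plus, Rplus_opp_r; apply exp_0).
  assert (exp u * (1 - u) <= 1) by nra.
  split; [apply Rabs_le; split|]; nra.
Qed.

Lemma sin_sub_id_le v : Rabs v <= 1 -> Rabs (sin v - v) <= v ^ 2 /\ Rabs (sin v) <= Rabs v.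
Proof.
  assert (Hpos : forall a, 0 <= a <= 1 -> a - a ^ 2 <= sin a <= a).
  { intros a Ha. destruct (pre_sin_bound a 0 ltac:(lra) ltac:(lra)) as [A B].
    unfold sin_approx, sin_term in A, B; simpl in A, B.
    assert (a ^ 3 <= a ^ 2) by nra. assert (0 <= a ^ 3) by nra. assert (a ^ 5 <= a ^ 3) by nra.
    split; nra. }
  intros Hv. apply Rabs_le_between in Hv.
  destruct (Rle_dec 0 v) as [P|P].
  - destruct (Hpos v ltac:(lra)). rewrite (Rabs_right v) by lra.
    split; apply Rabs_le; nra.
  - destruct (Hpos (- v) ltac:(lra)). rewrite sin_neg in *. rewrite (Rabs_left v) by lra.
    assert (v ^ 2 <= - v) by nra.
    split; apply Rabs_le; nra.
Qed.

Lemma cos_sub1_le v : Rabs v <= 1 -> Rabs (cos v - 1) <= v ^ 2.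
Proof.
  intros Hv. apply Rabs_le_between in Hv.
  destruct (pre_cos_bound v 0 ltac:(lra) ltac:(lra)) as [A B].
  unfold cos_approx, cos_term in A, B; simpl in A, B.
  assert (1 - v ^ 2 / 2 <= cos v) by (eapply Rle_trans; [|exact A]; right; field).
  assert (cos v <= 1 - v ^ 2 / 2 + v ^ 4 / 24) by (eapply Rle_trans; [exact B|]; right; field).
  assert (0 <= v ^ 2) by nra. assert (v ^ 2 <= 1) by nra. assert (v ^ 4 <= v ^ 2) by (replace (v ^ 4) with (v ^ 2 * v ^ 2) by ring; nra).
  apply Rabs_le; split; lra.
Qed.

Lemma Cmod_le_Rabs_sum (x y : R) : Cmod (x, y) <= Rabs x + Rabs y.
Proof.
  unfold Cmod; simpl.
  rewrite <- (sqrt_pow2 (Rabs x + Rabs y)) by (pose proof (Rabs_pos x); pose proof (Rabs_pos y); lra).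
  apply sqrt_le_1_alt. rewrite <- (pow2_abs x), <- (pow2_abs y) at 1.
  pose proof (Rabs_pos x); pose proof (Rabs_pos y); nra.
Qed.

Lemma Cexp_add a b : Cexp (Cplus a b) = Cmult (Cexp a) (Cexp b).
Proof.
  destruct a as [a1 a2], b as [b1 b2]. unfold Cexp, Cplus, Cmult; simpl.
  rewrite exp_plus, cos_plus, sin_plus. f_equal; ring.
Qed.

Lemma Cmod_Cexp w : Cmod (Cexp w) = exp (Re w).
Proof.
  unfold Cexp, Cmod, Re, Im; cbn [fst snd].
  replace ((exp (fst w) * cos (snd w)) ^ 2 + (exp (fst w) * sin (snd w)) ^ 2)
    with ((exp (fst w)) ^ 2 * ((sin (snd w)) ^ 2 + (cos (snd w)) ^ 2)) by ring.
  rewrite <- !Rsqr_pow2, sin2_cos2, Rmult_1_r. apply sqrt_Rsqr. left; apply exp_pos.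
Qed.

Lemma Cexp_neq0 w : Cexp w <> RtoC 0.
Proof. intros H. apply Cmod_gt_0 in H; auto. rewrite Cmod_Cexp. apply exp_pos. Qed.

Lemma Cexp_sub_lin_le h :
  Cmod h <= /2 -> Cmod (Cminus (Cminus (Cexp h) (RtoC 1)) h) <= 6 * Cmod h ^ 2.
Proof.
  intros Hh. destruct h as [u v].
  pose proof (Rmax_Cmod (u, v)) as Hm; simpl in Hm.
  assert (Hu : Rabs u <= /2) by (pose proof (Rmax_l (Rabs u) (Rabs v)); lra).
  assert (Hv : Rabs v <= 1) by (pose proof (Rmax_r (Rabs u) (Rabs v)); lra).
  destruct (exp_sub_lin_le u Hu) as [E1 E2].
  destruct (sin_sub_id_le v Hv) as [S1 S2].
  pose proof (cos_sub1_le v Hv) as C1.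
  pose proof (exp_pos u). pose proof (pow2_ge_0 u). pose proof (pow2_ge_0 v).
  rewrite Cmod2_alt; unfold Re, Im; cbn [fst snd].
  unfold Cexp, Cminus, Cplus, Copp, RtoC, Re, Im; cbn [fst snd].
  eapply Rle_trans; [apply Cmod_le_Rabs_sum|].
  assert (Re_bound : Rabs (exp u * cos v + - (1) + - u) <= 2 * u ^ 2 + 2 * v ^ 2).
  { replace (exp u * cos v + - (1) + - u) with ((exp u - 1 - u) + exp u * (cos v - 1)) by ring.
    eapply Rle_trans; [apply Rabs_triang|]. rewrite Rabs_mult, (Rabs_right (exp u)) by lra.
    pose proof (Rabs_pos (cos v - 1)). nra. }
  assert (Im_bound : Rabs (exp u * sin v + - 0 + - v) <= 3 * u ^ 2 + 3 * v ^ 2).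
  { replace (exp u * sin v + - 0 + - v) with ((exp u - 1 - u) * sin v + u * sin v + (sin v - v)) by ring.
    eapply Rle_trans; [apply Rabs_triang|].
    eapply Rle_trans; [apply Rplus_le_compat_r, Rabs_triang|].
    rewrite !Rabs_mult.
    pose proof (Rabs_pos (exp u - 1 - u)). pose proof (Rabs_pos (sin v)).
    pose proof (Rabs_pos u). pose proof (Rabs_pos v).
    assert (Rabs u * Rabs v <= u ^ 2 + v ^ 2) by (rewrite <- (pow2_abs u), <- (pow2_abs v); nra).
    nra. }
  lra.
Qed.

Lemma is_Cderive_Cexp z : is_Cderive Cexp z (Cexp z).
Proof.
  apply is_Cderive_intro. intros eps Heps.
  pose proof (Cmod_ge_0 (Cexp z)) as HM. set (M := Cmod (Cexp z)) in *.
  exists (Rmin (/2) (eps / (6 * M + 1))).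
  split; [apply Rmin_pos; [lra | apply Rdiv_lt_0_compat; lra]|].
  intros y Hy. set (h := Cminus y z) in *.
  assert (Ey : y = Cplus z h) by (unfold h; ring).
  replace (Cminus (Cminus (Cexp y) (Cexp z)) (Cmult h (Cexp z)))
    with (Cmult (Cexp z) (Cminus (Cminus (Cexp h) (RtoC 1)) h)) by (rewrite Ey, Cexp_add; ring).
  rewrite Cmod_mult. fold M.
  pose proof (Rmin_l (/2) (eps / (6 * M + 1))). pose proof (Rmin_r (/2) (eps / (6 * M + 1))).
  pose proof (Cexp_sub_lin_le h ltac:(lra)). pose proof (Cmod_ge_0 h).
  assert (Hh : (6 * M + 1) * Cmod h <= eps).
  { rewrite Rmult_comm. apply Rle_div_r; lra. }
  apply Rle_trans with (M * (6 * Cmod h ^ 2)); [apply Rmult_le_compat_l; auto|].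
  replace (M * (6 * Cmod h ^ 2)) with ((6 * M * Cmod h) * Cmod h) by ring.
  apply Rmult_le_compat_r; lra.
Qed.

Lemma is_Cderive_val (f : C -> C) z l l' : is_Cderive f z l -> l = l' -> is_Cderive f z l'.
Proof. now intros H <-. Qed.

Lemma is_Cderive_fexp lam w : is_Cderive (fexp lam) w (fexp lam w).
Proof.
  eapply is_Cderive_val.
  - apply (is_derive_mult (fun _ => lam) Cexp); [apply is_derive_const | apply is_Cderive_Cexp | exact Cmult_comm].
  - change (Cplus (Cmult (RtoC 0) (Cexp w)) (Cmult lam (Cexp w)) = fexp lam w).
    unfold fexp; ring.
Qed.

(* [Cprod_block w s k = w (s+1) * ... * w (s+k)]; the factor [w s] is not included. *)
Fixpoint Cprod_block (w : nat -> C) (s k : nat) : C :=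
  match k with O => RtoC 1 | S k => Cmult (Cprod_block w s k) (w (s + S k)%nat) end.

(* Unlike [sum_n f n], [Csum f n] stops at [f (n - 1)]. *)
Fixpoint Csum (f : nat -> C) (n : nat) : C :=
  match n with O => RtoC 0 | S n => Cplus (Csum f n) (f n) end.

Definition inv_prod_sum (z : nat -> C) (m : nat) : C := Csum (fun j => Cinv (Cprod_block z 0 j)) m.

Lemma is_Cderive_fiter lam n z :
  is_Cderive (fiter lam n) z (Cprod_block (fun i => fiter lam i z) 0 n).
Proof.
  induction n as [|n IH].
  - eapply is_Cderive_val; [apply is_derive_id | reflexivity].
  - exact (@is_derive_comp _ (AbsRing_NormedModule C_AbsRing) (fexp lam) (fiter lam n) z _ _
             (is_Cderive_fexp lam _) IH).
Qed.

Lemma fiter_add lam i j z : fiter lam i (fiter lam j z) = fiter lam (i + j) z.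
Proof.
  induction i as [|i IH]; [reflexivity|].
  change (fexp lam (fiter lam i (fiter lam j z)) = fexp lam (fiter lam (i + j) z)). now rewrite IH.
Qed.

Lemma Cderiv_fiter_zeta lam k s :
  Cderiv (fiter lam k) (zeta s lam) = Cprod_block (fun i => zeta i lam) s k.
Proof.
  rewrite (Cderiv_eq _ _ _ (is_Cderive_fiter lam k (zeta s lam))).
  induction k as [|k IH]; [reflexivity|]. cbn [Cprod_block]. rewrite IH.
  unfold zeta. rewrite fiter_add, Nat.add_comm. reflexivity.
Qed.

Lemma Cprod_block_neq0 w s k :
  (forall i, (1 <= i <= k)%nat -> w (s + i)%nat <> RtoC 0) -> Cprod_block w s k <> RtoC 0.
Proof.
  induction k as [|k IH]; intros Hw; simpl; [apply C1_nz|].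
  apply Cmult_neq_0; [apply IH; intros i Hi; apply Hw; lia | apply Hw; lia].
Qed.

Lemma zeta_neq0 lam i : lam <> RtoC 0 -> (1 <= i)%nat -> zeta i lam <> RtoC 0.
Proof.
  intros Hlam Hi. destruct i as [|i]; [lia|].
  apply Cmult_neq_0; [exact Hlam | apply Cexp_neq0].
Qed.

Section Multiplier.

Variable lam : C.
Hypothesis Hlam : lam <> RtoC 0.

Let P (j : nat) : C := Cprod_block (fun i => zeta i lam) 0 j.

Lemma P_neq0 j : P j <> RtoC 0.
Proof. apply Cprod_block_neq0. intros i Hi. apply zeta_neq0; [exact Hlam | lia]. Qed.

(* Differentiating [zeta (S n) = lam * Cexp (zeta n)] gives [lam zeta_(n+1)' = zeta_(n+1) (1 + lam zeta_n')],
   which is solved by [lam zeta_n' = P n * sum_(j<n) 1 / P j]. *)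
Lemma is_Cderive_zeta n :
  is_Cderive (zeta n) lam (Cdiv (Cmult (inv_prod_sum (fun i => zeta i lam) n) (P n)) lam).
Proof.
  induction n as [|n IH].
  - eapply is_Cderive_val; [apply is_derive_const|]. change (RtoC 0 = Cdiv (Cmult (RtoC 0) (RtoC 1)) lam).
    field; exact Hlam.
  - eapply is_Cderive_val.
    + apply (is_derive_mult (fun l => l) (fun l => Cexp (zeta n l))); [apply is_derive_id | | exact Cmult_comm].
      apply (@is_derive_comp _ (AbsRing_NormedModule C_AbsRing) Cexp (zeta n));
        [apply is_Cderive_Cexp | exact IH].
    + change (P (S n)) with (Cmult (P n) (Cmult lam (Cexp (zeta n lam)))).
      change (Cplus (Cmult (RtoC 1) (Cexp (zeta n lam)))
                (Cmult lam (Cmult (Cdiv (Cmult (Csum (fun j => Cinv (P j)) n) (P n)) lam) (Cexp (zeta n lam))))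
              = Cdiv (Cmult (Cplus (Csum (fun j => Cinv (P j)) n) (Cinv (P n)))
                            (Cmult (P n) (Cmult lam (Cexp (zeta n lam))))) lam).
      field. split; [apply P_neq0 | exact Hlam].
Qed.

Lemma Cderiv_zeta_ratio n :
  Cdiv (Cderiv (zeta n) lam) (Cderiv (fiter lam n) (RtoC 0)) = Cdiv (inv_prod_sum (fun i => zeta i lam) n) lam.
Proof.
  rewrite (Cderiv_eq _ _ _ (is_Cderive_zeta n)).
  change (RtoC 0) with (zeta 0 lam). rewrite Cderiv_fiter_zeta. fold (P n).
  field. split; [exact Hlam | apply P_neq0].
Qed.

End Multiplier.

Lemma giter_fiter Nt lam n z : giter Nt lam n z = fiter lam (n * Nt) z.
Proof.
  induction n as [|n IH]; [reflexivity|].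
  change (giter Nt lam (S n) z) with (fiter lam Nt (giter Nt lam n z)).
  now rewrite IH, fiter_add.
Qed.

Lemma xi_zeta Nt n lam : xi Nt n lam = zeta (n * Nt) lam.
Proof. apply giter_fiter. Qed.

Lemma xik_zeta Nt j k lam : xik Nt j k lam = zeta (k + j * Nt) lam.
Proof. unfold xik. rewrite xi_zeta. apply fiter_add. Qed.

Lemma Cmod_ge_of_near z z0 e : Cmod (Cminus z z0) <= e -> Cmod z0 - e <= Cmod z.
Proof.
  intros H. pose proof (Cmod_triangle z (Cminus z0 z)) as T.
  replace (Cplus z (Cminus z0 z)) with z0 in T by ring.
  rewrite <- Cmod_opp in H. replace (Copp (Cminus z z0)) with (Cminus z0 z) in H by ring. lra.
Qed.

Lemma one_sub_pow_ge x n : 0 <= x <= 1 -> 1 - INR n * x <= (1 - x) ^ n.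
Proof.
  intros Hx. induction n as [|n IH]; [simpl; lra|].
  rewrite S_INR. simpl. pose proof (pow_le (1 - x) n ltac:(lra)). pose proof (pos_INR n).
  destruct (Rle_dec 0 (1 - INR n * x)); nra.
Qed.

Lemma one_add_pow_le x n : 0 <= x <= 1 -> (1 + x) ^ n <= 1 + 3 ^ n * x.
Proof.
  intros Hx. induction n as [|n IH]; simpl; [lra|].
  assert (1 <= 3 ^ n) by (apply pow_R1_Rle; lra).
  assert ((1 + x) * (1 + x) ^ n <= (1 + x) * (1 + 3 ^ n * x)) by (apply Rmult_le_compat_l; lra).
  assert (3 ^ n * (x * x) <= 3 ^ n * x) by (apply Rmult_le_compat_l; nra).
  nra.
Qed.

Lemma exists_pow_eq beta n : 1 < beta -> (1 <= n)%nat -> exists rho, 1 < rho /\ rho ^ n = beta.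
Proof.
  intros Hb Hn. assert (HnR : 0 < INR n) by (apply lt_0_INR; lia).
  exists (Rpower beta (/ INR n)). split.
  - rewrite <- (Rpower_O beta) by lra. apply Rpower_lt; [lra | apply Rinv_0_lt_compat, HnR].
  - rewrite <- Rpower_pow by (apply exp_pos).
    rewrite Rpower_mult, Rinv_l, Rpower_1 by lra. reflexivity.
Qed.

(* Bernoulli's inequality makes [t <= (gam - 1) / (2 gam n)] small enough. *)
Lemma exists_contraction_margin gam n : 1 < gam -> (1 <= n)%nat ->
  exists t, 0 < t <= /2 /\ (gam + 1) / 2 <= gam * (1 - t) ^ n.
Proof.
  intros Hg Hn. assert (HnR : 1 <= INR n) by (apply (le_INR 1); lia).
  set (t := Rmin (/2) ((gam - 1) / (2 * gam * INR n))).
  assert (Ht0 : 0 < t <= /2) by (split; [apply Rmin_pos; [lra | apply Rdiv_lt_0_compat; nra] | apply Rmin_l]).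
  assert (Ht : t <= (gam - 1) / (2 * gam * INR n)) by apply Rmin_r.
  exists t. split; [exact Ht0|].
  assert (gam * (INR n * t) <= (gam - 1) / 2).
  { apply Rle_trans with (gam * (INR n * ((gam - 1) / (2 * gam * INR n)))).
    - apply Rmult_le_compat_l; [lra|]. apply Rmult_le_compat_l; lra.
    - right. field. lra. }
  pose proof (one_sub_pow_ge t n ltac:(lra)).
  nra.
Qed.

Lemma Cprod_block_add w s a b : Cprod_block w s (a + b) = Cmult (Cprod_block w s a) (Cprod_block w (s + a) b).
Proof.
  induction b as [|b IH].
  - rewrite Nat.add_0_r. simpl. ring.
  - rewrite <- plus_n_Sm. simpl. rewrite IH.
    replace (s + S (a + b))%nat with (s + a + S b)%nat by lia. ring.
Qed.

Lemma Cmod_Cprod_block_ge_pow w s k a : 0 <= a ->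
  (forall i, (1 <= i <= k)%nat -> a <= Cmod (w (s + i)%nat)) -> a ^ k <= Cmod (Cprod_block w s k).
Proof.
  intros Ha Hw. induction k as [|k IH]; simpl; [rewrite Cmod_1; lra|].
  rewrite Cmod_mult. specialize (IH (fun i Hi => Hw i ltac:(lia))). specialize (Hw (S k) ltac:(lia)).
  pose proof (pow_le a k Ha). nra.
Qed.

Lemma Cmod_Cprod_block_ge w0 w s k a : 0 <= a ->
  (forall i, (1 <= i <= k)%nat -> a * Cmod (w0 (s + i)%nat) <= Cmod (w (s + i)%nat)) ->
  a ^ k * Cmod (Cprod_block w0 s k) <= Cmod (Cprod_block w s k).
Proof.
  intros Ha Hw. induction k as [|k IH]; simpl; [lra|].
  rewrite !Cmod_mult. specialize (IH (fun i Hi => Hw i ltac:(lia))). specialize (Hw (S k) ltac:(lia)).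
  pose proof (pow_le a k Ha). pose proof (Cmod_ge_0 (Cprod_block w0 s k)).
  pose proof (Cmod_ge_0 (w0 (s + S k)%nat)).
  replace (a * a ^ k * (Cmod (Cprod_block w0 s k) * Cmod (w0 (s + S k)%nat)))
    with ((a ^ k * Cmod (Cprod_block w0 s k)) * (a * Cmod (w0 (s + S k)%nat))) by ring.
  apply Rmult_le_compat; auto; apply Rmult_le_pos; auto.
Qed.

(* Short products are handled by the factor bound [mu], longer ones by splitting off blocks of length [n]. *)
Lemma Cmod_Cprod_block_geometric w n m mu rho : (1 <= n)%nat -> 0 < mu -> 1 <= rho ->
  (forall i, (1 <= i <= m)%nat -> mu <= Cmod (w i)) ->
  (forall s, (s + n <= m)%nat -> rho ^ n <= Cmod (Cprod_block w s n)) ->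
  forall j, (j <= m)%nat -> (Rmin mu 1 / rho) ^ n * rho ^ j <= Cmod (Cprod_block w 0 j).
Proof.
  intros Hn Hmu Hrho Hw Hb.
  set (mu' := Rmin mu 1).
  assert (Hmu' : 0 < mu' <= 1) by (split; [apply Rmin_pos; lra | apply Rmin_r]).
  assert (Hq : 0 < mu' / rho <= 1).
  { split; [apply Rdiv_lt_0_compat; lra|]. apply Rle_div_l; lra. }
  intros j. induction j as [j IH] using (well_founded_induction Wf_nat.lt_wf). intros Hj.
  destruct (Nat.lt_ge_cases j n) as [Hlt|Hge].
  - eapply Rle_trans; [|apply (Cmod_Cprod_block_ge_pow _ _ _ mu'); [lra|]].
    + replace n with (j + (n - j))%nat by lia.
      rewrite pow_add, (Rmult_comm _ (rho ^ j)), <- Rmult_assoc, <- Rpow_mult_distr.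
      replace (rho * (mu' / rho)) with mu' by (field; lra).
      rewrite <- (Rmult_1_r (mu' ^ j)) at 2. apply Rmult_le_compat_l; [apply pow_le; lra|].
      rewrite <- (pow1 (n - j)). apply pow_incr. lra.
    + intros i Hi. eapply Rle_trans; [apply Rmin_l|]. apply Hw. lia.
  - replace j with ((j - n) + n)%nat by lia.
    rewrite Cprod_block_add, Cmod_mult, pow_add, <- Rmult_assoc.
    apply Rmult_le_compat; [apply Rmult_le_pos; apply pow_le; lra | apply pow_le; lra | |].
    + apply IH; lia.
    + apply Hb. lia.
Qed.

Lemma Cprod_block_ratio_sub1_le w0 w s k x : 0 <= x ->
  (forall i, (1 <= i <= k)%nat -> w (s + i)%nat <> RtoC 0) ->
  (forall i, (1 <= i <= k)%nat -> Cmod (Cminus (Cdiv (w0 (s + i)%nat) (w (s + i)%nat)) (RtoC 1)) <= x) ->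
  Cmod (Cminus (Cdiv (Cprod_block w0 s k) (Cprod_block w s k)) (RtoC 1)) <= (1 + x) ^ k - 1.
Proof.
  intros Hx Hw Hr. induction k as [|k IH]; simpl.
  - replace (Cminus (Cdiv (RtoC 1) (RtoC 1)) (RtoC 1)) with (RtoC 0) by (field; apply C1_nz).
    rewrite Cmod_0. lra.
  - assert (Hp : Cprod_block w s k <> RtoC 0) by (apply Cprod_block_neq0; intros i Hi; apply Hw; lia).
    specialize (IH (fun i Hi => Hw i ltac:(lia)) (fun i Hi => Hr i ltac:(lia))).
    specialize (Hr (S k) ltac:(lia)). specialize (Hw (S k) ltac:(lia)).
    set (A := Cminus (Cdiv (Cprod_block w0 s k) (Cprod_block w s k)) (RtoC 1)) in *.
    set (B := Cminus (Cdiv (w0 (s + S k)%nat) (w (s + S k)%nat)) (RtoC 1)) in *.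
    (* (1 + A)(1 + B) - 1 = AB + A + B *)
    replace (Cminus (Cdiv (Cmult (Cprod_block w0 s k) (w0 (s + S k)%nat))
                          (Cmult (Cprod_block w s k) (w (s + S k)%nat))) (RtoC 1))
      with (Cplus (Cplus (Cmult A B) A) B) by (unfold A, B; field; split; assumption).
    eapply Rle_trans; [apply Cmod_triangle|].
    eapply Rle_trans; [apply Rplus_le_compat_r, Cmod_triangle|].
    rewrite Cmod_mult.
    pose proof (Cmod_ge_0 A). pose proof (Cmod_ge_0 B).
    assert (1 <= (1 + x) ^ k) by (apply pow_R1_Rle; lra).
    assert (Cmod A * Cmod B <= ((1 + x) ^ k - 1) * x) by (apply Rmult_le_compat; auto).
    nra.
Qed.

Lemma Cmod_Cinv_sub_le_ratio (P P0 : C) c y : 0 < c -> c <= Cmod P0 -> P <> RtoC 0 ->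
  Cmod (Cminus (Cdiv P0 P) (RtoC 1)) <= y -> Cmod (Cminus (Cinv P) (Cinv P0)) <= y / c.
Proof.
  intros Hc HP0 HP Hy.
  assert (HP0' : P0 <> RtoC 0) by (apply Cmod_gt_0; lra).
  replace (Cminus (Cinv P) (Cinv P0)) with (Cmult (Cinv P0) (Cminus (Cdiv P0 P) (RtoC 1)))
    by (field; split; assumption).
  rewrite Cmod_mult, Cmod_inv, Rmult_comm by assumption.
  apply Rmult_le_compat; [apply Cmod_ge_0 | left; apply Rinv_0_lt_compat; lra | exact Hy |].
  apply Rinv_le_contravar; lra.
Qed.

Lemma Cmod_Cinv_sub_le (P P0 : C) B : 0 < B -> B <= Cmod P -> B <= Cmod P0 ->
  Cmod (Cminus (Cinv P) (Cinv P0)) <= 2 / B.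
Proof.
  intros HB H1 H2.
  assert (P <> RtoC 0) by (apply Cmod_gt_0; lra).
  assert (P0 <> RtoC 0) by (apply Cmod_gt_0; lra).
  unfold Cminus. eapply Rle_trans; [apply Cmod_triangle|]. rewrite Cmod_opp, !Cmod_inv by assumption.
  assert (/ Cmod P <= / B) by (apply Rinv_le_contravar; lra).
  assert (/ Cmod P0 <= / B) by (apply Rinv_le_contravar; lra).
  unfold Rdiv. lra.
Qed.

Lemma Csum_sub f g n : Cminus (Csum f n) (Csum g n) = Csum (fun j => Cminus (f j) (g j)) n.
Proof. induction n as [|n IH]; simpl; [ring|]. rewrite <- IH. ring. Qed.

Lemma Cmod_Csum_split_le (f : nat -> C) J m h K sg : 0 <= h -> 0 <= K -> 0 <= sg < 1 ->
  (forall j, (j < m)%nat -> (j < J)%nat -> Cmod (f j) <= h) ->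
  (forall j, (j < m)%nat -> (J <= j)%nat -> Cmod (f j) <= K * sg ^ j) ->
  Cmod (Csum f m) <= INR J * h + K * sg ^ J / (1 - sg).
Proof.
  intros Hh HK Hs H1 H2.
  assert (Main : Cmod (Csum f m) <= INR (Nat.min m J) * h + K * (sg ^ J - sg ^ Nat.max m J) / (1 - sg)).
  { induction m as [|m IH]; simpl Csum.
    - rewrite Cmod_0, Nat.max_r by lia. replace (sg ^ J - sg ^ J) with 0 by ring. simpl. unfold Rdiv. lra.
    - eapply Rle_trans; [apply Cmod_triangle|].
      specialize (IH (fun j a b => H1 j ltac:(lia) b) (fun j a b => H2 j ltac:(lia) b)).
      destruct (Nat.lt_ge_cases m J) as [Hl|Hg].
      + rewrite Nat.min_l, Nat.max_r in IH by lia. rewrite Nat.min_l, Nat.max_r, S_INR by lia.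
        specialize (H1 m ltac:(lia) Hl). lra.
      + rewrite Nat.min_r, Nat.max_l in IH by lia. rewrite Nat.min_r, Nat.max_l by lia.
        specialize (H2 m ltac:(lia) Hg).
        replace (K * (sg ^ J - sg ^ S m) / (1 - sg)) with (K * (sg ^ J - sg ^ m) / (1 - sg) + K * sg ^ m)
          by (simpl; field; lra).
        lra. }
  eapply Rle_trans; [exact Main|].
  assert (INR (Nat.min m J) <= INR J) by (apply le_INR; lia).
  assert (0 <= sg ^ Nat.max m J) by (apply pow_le; lra).
  assert (K * (sg ^ J - sg ^ Nat.max m J) / (1 - sg) <= K * sg ^ J / (1 - sg)).
  { unfold Rdiv. apply Rmult_le_compat_r; [left; apply Rinv_0_lt_compat; lra|]. nra. }
  nra.
Qed.

Lemma Cdiv_near (L lam0 : C) E : lam0 <> RtoC 0 -> 0 < E ->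
  exists eta r, 0 < eta /\ 0 < r /\ forall lam, Cmod (Cminus lam lam0) < r ->
    lam <> RtoC 0 /\
    forall S, Cmod (Cminus S L) <= eta -> Cmod (Cminus (Cdiv S lam) (Cdiv L lam0)) <= E.
Proof.
  intros H0 HE. set (a := Cmod lam0). assert (Ha : 0 < a) by (apply Cmod_gt_0; exact H0).
  pose proof (Cmod_ge_0 L) as HCL.
  set (r := Rmin (a / 2) (E * a ^ 2 / (4 * Cmod L + 1))).
  assert (Hr1 : r <= a / 2) by apply Rmin_l.
  assert (Hr2 : r * (4 * Cmod L + 1) <= E * a ^ 2) by (apply Rle_div_r; [lra | apply Rmin_r]).
  exists (E * a / 4), r. split; [apply Rdiv_lt_0_compat; nra|].
  split; [apply Rmin_pos; [lra | apply Rdiv_lt_0_compat; [apply Rmult_lt_0_compat, pow_lt|]; lra]|].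
  intros lam Hlam.
  pose proof (Cmod_ge_of_near lam lam0 r ltac:(lra)) as Hb. fold a in Hb.
  assert (Hl : lam <> RtoC 0) by (apply Cmod_gt_0; lra).
  split; [exact Hl|]. intros S HS.
  replace (Cminus (Cdiv S lam) (Cdiv L lam0)) with
    (Cplus (Cdiv (Cminus S L) lam) (Cdiv (Cmult L (Cminus lam0 lam)) (Cmult lam lam0)))
    by (field; split; assumption).
  rewrite <- Cmod_opp in Hlam. replace (Copp (Cminus lam lam0)) with (Cminus lam0 lam) in Hlam by ring.
  eapply Rle_trans; [apply Cmod_triangle|].
  rewrite !Cmod_div, !Cmod_mult by (try apply Cmult_neq_0; assumption). fold a.
  pose proof (Cmod_ge_0 (Cminus lam0 lam)).
  assert (Cmod (Cminus S L) / Cmod lam <= E / 2) by (apply Rle_div_l; nra).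
  assert (Cmod L * Cmod (Cminus lam0 lam) / (Cmod lam * a) <= E / 2).
  { apply Rle_div_l; [nra|].
    assert (Cmod L * Cmod (Cminus lam0 lam) <= Cmod L * r) by (apply Rmult_le_compat_l; lra).
    assert (Cmod L * r * 4 <= E * a ^ 2) by nra.
    assert (E * a * (a / 2) <= E * a * Cmod lam) by (apply Rmult_le_compat_l; nra).
    nra. }
  lra.
Qed.

Section UniformGrowth.

Variables (z0 : nat -> C) (n : nat) (gam Delta : R).
Hypotheses (Hn : (1 <= n)%nat) (Hgam : 1 < gam) (HDelta : 0 < Delta).
Hypothesis Hz0 : forall i, (1 <= i)%nat -> Delta <= Cmod (z0 i).
Hypothesis Hblock : forall s, gam <= Cmod (Cprod_block z0 s n).

(* A relative perturbation of size [t] costs at most the factor [(1 - t) ^ n] on each block,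
   so blocks stay above [(gam + 1) / 2 = rho ^ n]. *)
Lemma uniform_geometric_growth : exists theta c rho, 0 < theta <= Delta / 2 /\ 0 < c /\ 1 < rho /\
  forall z m, (forall i, (i <= m)%nat -> Cmod (Cminus (z i) (z0 i)) <= theta) ->
  (forall i, (1 <= i <= m)%nat -> Delta / 2 <= Cmod (z i)) /\
  (forall j, (j <= m)%nat -> c * rho ^ j <= Cmod (Cprod_block z 0 j)).
Proof.
  destruct (exists_contraction_margin gam n Hgam Hn) as [t [Ht Hmargin]].
  destruct (exists_pow_eq ((gam + 1) / 2) n ltac:(lra) Hn) as [rho [Hrho Hrho_n]].
  exists (t * Delta), ((Rmin (Delta / 2) 1 / rho) ^ n), rho.
  split; [split; nra|]. split; [apply pow_lt, Rdiv_lt_0_compat; [apply Rmin_pos|]; lra|].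
  split; [exact Hrho|]. intros z m Hz.
  assert (Hfactor : forall i, (1 <= i <= m)%nat -> (1 - t) * Cmod (z0 i) <= Cmod (z i)).
  { intros i Hi. pose proof (Cmod_ge_of_near _ _ _ (Hz i ltac:(lia))). specialize (Hz0 i ltac:(lia)). nra. }
  assert (Hlow : forall i, (1 <= i <= m)%nat -> Delta / 2 <= Cmod (z i)).
  { intros i Hi. specialize (Hfactor i Hi). specialize (Hz0 i ltac:(lia)). nra. }
  split; [exact Hlow|].
  apply Cmod_Cprod_block_geometric; [exact Hn | lra | lra | exact Hlow |].
  intros s Hs. rewrite Hrho_n.
  pose proof (Cmod_Cprod_block_ge z0 z s n (1 - t) ltac:(lra) (fun i Hi => Hfactor (s + i)%nat ltac:(lia))).
  pose proof (pow_le (1 - t) n ltac:(lra)). specialize (Hblock s). nra.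
Qed.

End UniformGrowth.

Section Stability.

Variables (z0 : nat -> C) (L : C) (theta mu c rho : R).
Hypotheses (Htheta : 0 < theta <= mu) (Hc : 0 < c) (Hrho : 1 < rho).
Hypothesis Hgrowth : forall z m, (forall i, (i <= m)%nat -> Cmod (Cminus (z i) (z0 i)) <= theta) ->
  (forall i, (1 <= i <= m)%nat -> mu <= Cmod (z i)) /\
  (forall j, (j <= m)%nat -> c * rho ^ j <= Cmod (Cprod_block z 0 j)).
Hypothesis HL : forall eps, 0 < eps -> exists M, forall m, (M <= m)%nat ->
  Cmod (Cminus (inv_prod_sum z0 m) L) < eps.

Lemma base_geometric_growth j : c * rho ^ j <= Cmod (Cprod_block z0 0 j).
Proof.
  assert (Hself : forall i, (i <= j)%nat -> Cmod (Cminus (z0 i) (z0 i)) <= theta).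
  { intros i _. replace (Cminus (z0 i) (z0 i)) with (RtoC 0) by ring. rewrite Cmod_0. lra. }
  apply (proj2 (Hgrowth z0 j Hself)). lia.
Qed.

Lemma Cinv_prod_sub_le_head z m d j : d <= theta ->
  (forall i, (i <= m)%nat -> Cmod (Cminus (z i) (z0 i)) <= d) -> (j <= m)%nat ->
  Cmod (Cminus (Cinv (Cprod_block z 0 j)) (Cinv (Cprod_block z0 0 j))) <= 3 ^ j * (d / mu) / c.
Proof.
  intros Hd Hz Hj.
  destruct (Hgrowth z m (fun i Hi => Rle_trans _ _ _ (Hz i Hi) Hd)) as [Hmu Hgr].
  assert (Hx : 0 <= d / mu <= 1).
  { pose proof (Cmod_ge_0 (Cminus (z 0%nat) (z0 0%nat))). specialize (Hz 0%nat ltac:(lia)).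
    split; [apply Rdiv_le_0_compat | apply Rle_div_l]; lra. }
  assert (Hrj : 1 <= rho ^ j) by (apply pow_R1_Rle; lra).
  apply (Rle_trans _ (((1 + d / mu) ^ j - 1) / c)).
  - apply Cmod_Cinv_sub_le_ratio; [lra | pose proof (base_geometric_growth j); nra | |].
    + apply Cmod_gt_0. specialize (Hgr j Hj). nra.
    + apply Cprod_block_ratio_sub1_le; [lra | |].
      * intros i Hi. simpl. apply Cmod_gt_0. specialize (Hmu i ltac:(lia)). lra.
      * intros i Hi. simpl. specialize (Hmu i ltac:(lia)). specialize (Hz i ltac:(lia)).
        assert (Hzi : z i <> RtoC 0) by (apply Cmod_gt_0; lra).
        replace (Cminus (Cdiv (z0 i) (z i)) (RtoC 1)) with (Cdiv (Cminus (z0 i) (z i)) (z i))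
          by (field; exact Hzi).
        rewrite Cmod_div by exact Hzi. rewrite <- Cmod_opp in Hz.
        replace (Copp (Cminus (z i) (z0 i))) with (Cminus (z0 i) (z i)) in Hz by ring.
        unfold Rdiv. apply Rmult_le_compat; [apply Cmod_ge_0 | left; apply Rinv_0_lt_compat; lra | lra |].
        apply Rinv_le_contravar; lra.
  - unfold Rdiv. apply Rmult_le_compat_r; [left; apply Rinv_0_lt_compat; lra|].
    pose proof (one_add_pow_le (d / mu) j Hx). lra.
Qed.

Lemma Cinv_prod_sub_le_tail z m j :
  (forall i, (i <= m)%nat -> Cmod (Cminus (z i) (z0 i)) <= theta) -> (j <= m)%nat ->
  Cmod (Cminus (Cinv (Cprod_block z 0 j)) (Cinv (Cprod_block z0 0 j))) <= 2 / c * (/ rho) ^ j.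
Proof.
  intros Hz Hj. pose proof (pow_lt rho j ltac:(lra)).
  replace (2 / c * (/ rho) ^ j) with (2 / (c * rho ^ j)) by (rewrite pow_inv; field; lra).
  apply Cmod_Cinv_sub_le; [nra | apply (proj2 (Hgrowth z m Hz)), Hj | apply base_geometric_growth].
Qed.

(* The tail is made small by choosing [J], then the first [J] terms by choosing [delta]. *)
Lemma inv_prod_sum_stable eps : 0 < eps -> exists N1 delta, 0 < delta /\
  forall z m, (N1 <= m)%nat -> (forall i, (i <= m)%nat -> Cmod (Cminus (z i) (z0 i)) <= delta) ->
  Cmod (Cminus (inv_prod_sum z m) L) <= eps.
Proof.
  intros Heps.
  set (sg := / rho). assert (Hsg : 0 < sg < 1).
  { split; [apply Rinv_0_lt_compat; lra | rewrite <- Rinv_1; apply Rinv_lt_contravar; lra]. }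
  assert (HK : 0 < 2 / c) by (apply Rdiv_lt_0_compat; lra).
  destruct (pow_lt_1_zero sg ltac:(rewrite Rabs_right; lra) (eps / 4 * (1 - sg) / (2 / c)))
    as [J HJ]; [apply Rdiv_lt_0_compat; [nra | lra]|].
  specialize (HJ J (Nat.le_refl J)). rewrite Rabs_right in HJ by (left; apply pow_lt; lra).
  assert (Htail : 2 / c * sg ^ J / (1 - sg) <= eps / 4).
  { apply Rle_div_l; [lra|]. rewrite Rmult_comm. apply Rle_div_r; lra. }
  set (A := INR J * 3 ^ J + 1).
  assert (HA : 1 <= A) by (unfold A; pose proof (pos_INR J); pose proof (pow_lt 3 J ltac:(lra)); nra).
  set (delta := Rmin theta (mu * c * eps / (4 * A))).
  assert (Hd1 : delta <= theta) by apply Rmin_l.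
  assert (Hd2 : delta <= mu * c * eps / (4 * A)) by apply Rmin_r.
  assert (Hdelta : 0 < delta).
  { apply Rmin_pos; [lra|]. apply Rdiv_lt_0_compat; [|lra]. apply Rmult_lt_0_compat; [nra | lra]. }
  assert (Hhead : INR J * (3 ^ J * (delta / mu) / c) <= eps / 4).
  { replace (INR J * (3 ^ J * (delta / mu) / c)) with ((INR J * 3 ^ J) * delta / (mu * c))
      by (field; split; lra).
    apply Rle_div_l; [nra|].
    apply Rle_div_r in Hd2; [|lra].
    assert (0 <= INR J * 3 ^ J) by (apply Rmult_le_pos; [apply pos_INR | left; apply pow_lt; lra]).
    unfold A in Hd2. nra. }
  destruct (HL (eps / 2) ltac:(lra)) as [M HM].
  exists M, delta. split; [exact Hdelta|]. intros z m Hm Hz.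
  replace (Cminus (inv_prod_sum z m) L) with
    (Cplus (Csum (fun j => Cminus (Cinv (Cprod_block z 0 j)) (Cinv (Cprod_block z0 0 j))) m)
           (Cminus (inv_prod_sum z0 m) L)) by (unfold inv_prod_sum; rewrite <- Csum_sub; ring).
  eapply Rle_trans; [apply Cmod_triangle|].
  assert (Hdiff : Cmod (Csum (fun j => Cminus (Cinv (Cprod_block z 0 j)) (Cinv (Cprod_block z0 0 j))) m)
                  <= INR J * (3 ^ J * (delta / mu) / c) + 2 / c * sg ^ J / (1 - sg)).
  { apply Cmod_Csum_split_le; [| lra | lra | |].
    - apply Rdiv_le_0_compat; [apply Rmult_le_pos; [left; apply pow_lt | apply Rdiv_le_0_compat]|]; lra.
    - intros j Hjm HjJ. eapply Rle_trans; [apply (Cinv_prod_sub_le_head z m delta j); auto; lia|].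
      unfold Rdiv. apply Rmult_le_compat_r; [left; apply Rinv_0_lt_compat; lra|].
      apply Rmult_le_compat_r; [apply Rdiv_le_0_compat; lra|]. apply Rle_pow; [lra | lia].
    - intros j Hjm HjJ. apply (Cinv_prod_sub_le_tail z m j); [|lia].
      intros i Hi. eapply Rle_trans; [apply Hz; exact Hi | exact Hd1]. }
  specialize (HM m Hm). lra.
Qed.

End Stability.

Lemma multiplier_ratio_estimate lam0 n gam Delta L E :
  lam0 <> RtoC 0 -> (1 <= n)%nat -> 1 < gam -> 0 < Delta -> 0 < E ->
  (forall i, (1 <= i)%nat -> Delta <= Cmod (zeta i lam0)) ->
  (forall s, gam <= Cmod (Cprod_block (fun i => zeta i lam0) s n)) ->
  (forall eps, 0 < eps -> exists M, forall m, (M <= m)%nat ->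
     Cmod (Cminus (inv_prod_sum (fun i => zeta i lam0) m) L) < eps) ->
  exists N1 r delta, 0 < r /\ 0 < delta /\
    forall lam, Cmod (Cminus lam lam0) < r -> forall m, (N1 <= m)%nat ->
    (forall i, (i <= m)%nat -> Cmod (Cminus (zeta i lam) (zeta i lam0)) <= delta) ->
    Cmod (Cminus (Cdiv (Cderiv (zeta m) lam) (Cderiv (fiter lam m) (RtoC 0))) (Cdiv L lam0)) <= E.
Proof.
  intros Hlam0 Hn Hgam HDelta HE HD Hblock HL.
  destruct (Cdiv_near L lam0 E Hlam0 HE) as [eta [r [Heta [Hr Hdiv]]]].
  destruct (uniform_geometric_growth _ n gam Delta Hn Hgam HDelta HD Hblock)
    as [theta [c [rho [Htheta [Hc [Hrho Hgrowth]]]]]].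
  destruct (inv_prod_sum_stable _ L theta (Delta / 2) c rho Htheta Hc Hrho Hgrowth HL eta Heta)
    as [N1 [delta [Hdelta Hstable]]].
  exists N1, r, delta. split; [exact Hr|]. split; [exact Hdelta|].
  intros lam Hlam m Hm Hz. destruct (Hdiv lam Hlam) as [Hlam_neq0 Hdiv_lam].
  rewrite Cderiv_zeta_ratio by exact Hlam_neq0.
  apply Hdiv_lam, (Hstable (fun i => zeta i lam) m Hm Hz).
Qed.

Lemma nonrecurrent_zeta_bounded_away lam0 : nonrecurrent lam0 ->
  exists Delta, 0 < Delta /\ forall i, (1 <= i)%nat -> Delta <= Cmod (zeta i lam0).
Proof.
  intros [Hlam0 [_ [Delta [HDelta Hiso]]]]. exists Delta. split; [exact HDelta|].
  intros i Hi. destruct (Rlt_or_le (Cmod (zeta i lam0)) Delta) as [Hlt|Hle]; [|exact Hle].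
  exfalso. apply (zeta_neq0 lam0 i Hlam0 Hi), Hiso. split; [|exact Hlt].
  intros eps Heps. exists i. replace (Cminus (zeta i lam0) (zeta i lam0)) with (RtoC 0) by ring.
  rewrite Cmod_0. exact Heps.
Qed.

Lemma sum_n_inv_Cderiv_fiter lam m :
  sum_n (fun j => Cinv (Cderiv (fiter lam j) (RtoC 0))) m = inv_prod_sum (fun i => zeta i lam) (S m).
Proof.
  change (RtoC 0) with (zeta 0 lam).
  induction m as [|m IH].
  - rewrite sum_O, Cderiv_fiter_zeta. unfold inv_prod_sum; simpl. ring.
  - rewrite sum_Sn, IH, Cderiv_fiter_zeta. reflexivity.
Qed.

Lemma inv_prod_sum_cvg lam0 L :
  filterlim (fun n => sum_n (fun j => Cinv (Cderiv (fiter lam0 j) (RtoC 0))) n) eventually (locally L) ->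
  forall eps, 0 < eps -> exists M, forall m, (M <= m)%nat ->
    Cmod (Cminus (inv_prod_sum (fun i => zeta i lam0) m) L) < eps.
Proof.
  intros HL eps Heps.
  destruct (proj1 (filterlim_locally _ _) HL (mkposreal (eps / 2) ltac:(lra))) as [N HN].
  exists (S N). intros [|m] Hm; [lia|].
  specialize (HN m ltac:(lia)). apply C_NormedModule_mixin_compat2 in HN. simpl in HN.
  rewrite sum_n_inv_Cderiv_fiter in HN.
  assert (sqrt 2 < 2) by (rewrite <- (sqrt_pow2 2) at 2 by lra; apply sqrt_lt_1_alt; lra).
  pose proof (Cmod_ge_0 (Cminus (inv_prod_sum (fun i => zeta i lam0) (S m)) L)).
  change (Cmod (Cminus (inv_prod_sum (fun i => zeta i lam0) (S m)) L) < sqrt 2 * (eps / 2)) in HN.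
  nra.
Qed.

Lemma zeta_close_of_xik_close Nt lam lam0 n delta : (1 <= Nt)%nat ->
  (forall j k, (j <= n)%nat -> (k <= Nt)%nat ->
     Cmod (Cminus (xik Nt j k lam) (xik Nt j k lam0)) <= delta) ->
  forall i, (i <= n * Nt)%nat -> Cmod (Cminus (zeta i lam) (zeta i lam0)) <= delta.
Proof.
  intros HNt Hxik i Hi.
  pose proof (Nat.div_mod_eq i Nt). pose proof (Nat.mod_upper_bound i Nt ltac:(lia)).
  specialize (Hxik (i / Nt)%nat (i mod Nt)%nat ltac:(apply Nat.Div0.div_le_upper_bound; lia) ltac:(lia)).
  rewrite !xik_zeta in Hxik. replace (i mod Nt + i / Nt * Nt)%nat with i in Hxik by lia. exact Hxik.
Qed.

Theorem mainTheorem10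
  (lam0 : C) (Hnr : nonrecurrent lam0)
  (Nt : nat) (HNt : (1 <= Nt)%nat) (gam : R) (Hgam : 1 < gam)
  (Hbenini : forall k, (Nt <= k)%nat -> forall z, postsing lam0 z ->
     gam < Cmod (Cderiv (fiter lam0 k) z))
  (L : C)
  (HL : filterlim
          (fun n => sum_n (fun j => Cinv (Cderiv (fiter lam0 j) (RtoC 0))) n)
          eventually (locally L))
  (HL0 : L <> RtoC 0)
  (q : R) (Hq : 0 < q < 1) :
  (exists (N1 : nat) (r delta : R), 0 < r /\ 0 < delta /\
     forall lam, Cmod (Cminus lam lam0) < r -> forall n, (N1 <= n)%nat ->
       (forall j k, (j <= n)%nat -> (k <= Nt)%nat ->
          Cmod (Cminus (xik Nt j k lam) (xik Nt j k lam0)) <= delta) ->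
       Cmod (Cminus (Cdiv (Cderiv (zeta n) lam) (Cderiv (fiter lam n) (RtoC 0)))
                    (Cdiv L lam0))
         <= q * Cmod (Cdiv L lam0))
  /\
  (exists (N1 : nat) (r delta : R), 0 < r /\ 0 < delta /\
     forall lam, Cmod (Cminus lam lam0) < r -> forall n, (N1 <= n)%nat ->
       (forall j k, (j <= n)%nat -> (k <= Nt)%nat ->
          Cmod (Cminus (xik Nt j k lam) (xik Nt j k lam0)) <= delta) ->
       Cmod (Cminus (Cdiv (Cderiv (xi Nt n) lam) (Cderiv (giter Nt lam n) (RtoC 0)))
                    (Cdiv L lam0))
         <= q * Cmod (Cdiv L lam0)).
Proof.
  assert (Hlam0 : lam0 <> RtoC 0) by apply Hnr.
  destruct (nonrecurrent_zeta_bounded_away lam0 Hnr) as [Delta [HDelta HD]].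
  assert (Hblock : forall s, gam <= Cmod (Cprod_block (fun i => zeta i lam0) s Nt)).
  { intros s. left. rewrite <- Cderiv_fiter_zeta. apply Hbenini; [lia|].
    intros eps Heps. exists s. replace (Cminus (zeta s lam0) (zeta s lam0)) with (RtoC 0) by ring.
    rewrite Cmod_0. exact Heps. }
  assert (HE : 0 < q * Cmod (Cdiv L lam0)).
  { apply Rmult_lt_0_compat; [lra|]. rewrite Cmod_div by exact Hlam0.
    apply Rdiv_lt_0_compat; apply Cmod_gt_0; assumption. }
  destruct (multiplier_ratio_estimate lam0 Nt gam Delta L _ Hlam0 HNt Hgam HDelta HE HD Hblock
              (inv_prod_sum_cvg lam0 L HL)) as [N1 [r [delta [Hr [Hdelta Hest]]]]].
  split.
  - exists N1, r, delta. split; [exact Hr|]. split; [exact Hdelta|].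
    intros lam Hlam n Hn Hxik. apply Hest; [exact Hlam | exact Hn |].
    intros i Hi. apply (zeta_close_of_xik_close Nt lam lam0 n delta HNt Hxik). nia.
  - exists N1, r, delta. split; [exact Hr|]. split; [exact Hdelta|].
    intros lam Hlam n Hn Hxik.
    assert (Hxi : xi Nt n = zeta (n * Nt)) by (extensionality l; apply xi_zeta).
    assert (Hg : giter Nt lam n = fiter lam (n * Nt)) by (extensionality w; apply giter_fiter).
    rewrite Hxi, Hg. apply Hest; [exact Hlam | nia |].
    exact (zeta_close_of_xik_close Nt lam lam0 n delta HNt Hxik).
Qed.
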